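(* Let $(\mathfrak g,[\cdot,\cdot],\alpha,\varepsilon,B)$ be a quadratic color Hom-Lie algebra and let $\beta$ be a symmetric automorphism of it, i.e. $\beta:\mathfrak g\to\mathfrak g$ is an even bijective linear map with $\beta([x,y])=[\beta(x),\beta(y)]$, $\beta\circ\alpha=\alpha\circ\beta$, and $B(\beta(x),y)=B(x,\beta(y))$ for all $x,y\in\mathfrak g$. Define $[\cdot,\cdot]_\beta=\beta\circ[\cdot,\cdot]$ and $B_\beta(x,y)=B(\beta(x),y)$. Then $(\mathfrak g,[\cdot,\cdot]_\beta,\beta\circ\alpha,\varepsilon,B_\beta)$ is a quadratic color Hom-Lie algebra.
   Context: $\mathbb K$ is a field of characteristic zero and $\Gamma$ an abelian group. A bicharacter is a map $\varepsilon:\Gamma\times\Gamma\to\mathbb K\setminus\{0\}$ with $\varepsilon(a,b)\varepsilon(b,a)=1$, $\varepsilon(a,b+c)=\varepsilon(a,b)\varepsilon(a,c)$, $\varepsilon(a+b,c)=\varepsilon(a,c)\varepsilon(b,c)$; for homogeneous $x,y$, $\varepsilon(x,y)$ means $\varepsilon(\deg x,\deg y)$. Even maps preserve degree. A color Hom-Lie algebra $(\mathfrak g,[\cdot,\cdot],\alpha,\varepsilon)$ is a $\Gamma$-graded vector space with even bilinear bracket and even linear $\alpha$ such that, for homogeneous $x,y,z$, $[x,y]=-\varepsilon(x,y)[y,x]$ and $\varepsilon(z,x)[\alpha(x),[y,z]]+\varepsilon(x,y)[\alpha(y),[z,x]]+\varepsilon(y,z)[\alpha(z),[x,y]]=0$.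 It is quadratic, written $(\mathfrak g,[\cdot,\cdot],\alpha,\varepsilon,B)$, if $B$ is a nondegenerate bilinear form on $\mathfrak g$ which is $\varepsilon$-symmetric ($B(x,y)=\varepsilon(x,y)B(y,x)$), invariant ($B([x,y],z)=B(x,[y,z])$), and such that $B(\alpha(x),y)=B(x,\alpha(y))$ for all $x,y$. *)

From HB Require Import structures.
From mathcomp Require Import all_boot all_order all_algebra.
Set Implicit Arguments. Unset Strict Implicit. Unset Printing Implicit Defensive.
Import GRing.Theory.
Local Open Scope ring_scope.

Section ColorHomLie.
Variables (K : fieldType) (Gamma : zmodType) (V : lmodType K).

(* A Gamma-grading of V: [homog a x] means x lies in the homogeneous
   component V_a.  V = (+)_a V_a (internal direct sum of subspaces). *)
Definition is_grading (homog : Gamma -> V -> Prop) : Prop :=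
  [/\ (forall a, homog a 0),
      (forall a (k : K) x y, homog a x -> homog a y -> homog a (k *: x + y)),
      (forall x : V, exists (s : seq Gamma) (f : Gamma -> V),
          [/\ uniq s, (forall a, homog a (f a)) & x = \sum_(a <- s) f a]) &
      (forall (s : seq Gamma) (f : Gamma -> V), uniq s ->
          (forall a, homog a (f a)) -> \sum_(a <- s) f a = 0 ->
          forall a, a \in s -> f a = 0)].

Definition is_bicharacter (eps : Gamma -> Gamma -> K) : Prop :=
  [/\ (forall a b, eps a b != 0),
      (forall a b, eps a b * eps b a = 1),
      (forall a b c, eps a (b + c) = eps a b * eps a c) &
      (forall a b c, eps (a + b) c = eps a c * eps b c)].

Definition is_linear_map (f : V -> V) : Prop :=
  forall (k : K) x y, f (k *: x + y) = k *: f x + f y.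

Definition is_even_map (homog : Gamma -> V -> Prop) (f : V -> V) : Prop :=
  forall a x, homog a x -> homog a (f x).

Definition is_bilinear_bracket (br : V -> V -> V) : Prop :=
  (forall (k : K) x y z, br (k *: x + y) z = k *: br x z + br y z) /\
  (forall (k : K) x y z, br x (k *: y + z) = k *: br x y + br x z).

Definition is_even_bracket (homog : Gamma -> V -> Prop) (br : V -> V -> V) : Prop :=
  forall a b x y, homog a x -> homog b y -> homog (a + b) (br x y).

Definition color_HomLie (homog : Gamma -> V -> Prop) (br : V -> V -> V)
    (alpha : V -> V) (eps : Gamma -> Gamma -> K) : Prop :=
  [/\ is_grading homog /\ is_bicharacter eps,
      is_bilinear_bracket br /\ is_even_bracket homog br,
      is_linear_map alpha /\ is_even_map homog alpha,
      (forall a b x y, homog a x -> homog b y -> br x y = - (eps a b *: br y x)) &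
      (forall a b c x y z, homog a x -> homog b y -> homog c z ->
         eps c a *: br (alpha x) (br y z) + eps a b *: br (alpha y) (br z x)
         + eps b c *: br (alpha z) (br x y) = 0)]
  .


Definition is_bilinear_form (B : V -> V -> K) : Prop :=
  (forall (k : K) x y z, B (k *: x + y) z = k * B x z + B y z) /\
  (forall (k : K) x y z, B x (k *: y + z) = k * B x y + B x z).

Definition quadratic_color_HomLie (homog : Gamma -> V -> Prop) (br : V -> V -> V)
    (alpha : V -> V) (eps : Gamma -> Gamma -> K) (B : V -> V -> K) : Prop :=
  [/\ color_HomLie homog br alpha eps /\ is_bilinear_form B,
      (forall x, (forall y, B x y = 0) -> x = 0),
      (forall a b x y, homog a x -> homog b y -> B x y = eps a b * B y x),
      (forall x y z, B (br x y) z = B x (br y z)) &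
      (forall x y, B (alpha x) y = B x (alpha y))].

Definition symmetric_automorphism (homog : Gamma -> V -> Prop) (br : V -> V -> V)
    (alpha : V -> V) (B : V -> V -> K) (beta : V -> V) : Prop :=
  [/\ is_linear_map beta /\ is_even_map homog beta, bijective beta,
      (forall x y, beta (br x y) = br (beta x) (beta y)),
      (forall x, beta (alpha x) = alpha (beta x)) &
      (forall x y, B (beta x) y = B x (beta y))].

End ColorHomLie.

From mathcomp Require Import all_boot all_order all_algebra.
Local Open Scope ring_scope.
Import GRing.Theory.

Set Implicit Arguments.
Unset Strict Implicit.

(* Because beta is multiplicative, commutes with alpha and is B-self-adjoint,
   each axiom of the twisted structure is an axiom of the original one with
   beta applied to it: once for skew-symmetry and invariance, twice for the
   Hom-Jacobi identity.  Nondegeneracy of B_beta is injectivity of beta. *)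

Section LinearMaps.
Variables (K : fieldType) (V : lmodType K) (f : V -> V).
Hypothesis f_linear : is_linear_map f.

Lemma linear_map0 : f 0 = 0.
Proof.
have := f_linear 1 0 0; rewrite !scale1r addr0 => f0.
by apply: (@addrI _ (f 0)); rewrite -f0 addr0.
Qed.

Lemma linear_mapZ k x : f (k *: x) = k *: f x.
Proof. by have := f_linear k x 0; rewrite linear_map0 !addr0. Qed.

Lemma linear_mapD x y : f (x + y) = f x + f y.
Proof. by have := f_linear 1 x y; rewrite !scale1r. Qed.

Lemma linear_mapN x : f (- x) = - f x.
Proof. by rewrite -scaleN1r linear_mapZ scaleN1r. Qed.

Lemma linear_map_comp (g : V -> V) : is_linear_map g -> is_linear_map (f \o g).
Proof. by move=> g_linear k x y /=; rewrite g_linear f_linear. Qed.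

End LinearMaps.

Section Twist.
Variables (K : fieldType) (Gamma : zmodType) (V : lmodType K).
Variables (homog : Gamma -> V -> Prop) (br : V -> V -> V) (alpha : V -> V).
Variables (eps : Gamma -> Gamma -> K) (B : V -> V -> K) (beta : V -> V).
Hypotheses (beta_linear : is_linear_map beta) (beta_even : is_even_map homog beta).

Local Notation br_beta := (fun x y => beta (br x y)).
Local Notation B_beta := (fun x y => B (beta x) y).

Lemma even_map_comp (f : V -> V) :
  is_even_map homog f -> is_even_map homog (beta \o f).
Proof. by move=> f_even a x /f_even /beta_even. Qed.

Lemma twist_bilinear_bracket :
  is_bilinear_bracket br -> is_bilinear_bracket br_beta.
Proof. by case=> brDl brDr; split=> k x y z; rewrite ?brDl ?brDr beta_linear. Qed.

Lemma twist_even_bracket : is_even_bracket homog br -> is_even_bracket homog br_beta.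
Proof. by move=> br_even a b x y hx hy; apply/beta_even/br_even. Qed.

Lemma twist_color_HomLie :
  (forall x y, beta (br x y) = br (beta x) (beta y)) ->
  color_HomLie homog br alpha eps -> color_HomLie homog br_beta (beta \o alpha) eps.
Proof.
move=> beta_mul [grad [br_bilin br_even] [alpha_linear alpha_even] br_skew jacobi].
split=> //.
- by split; [exact: twist_bilinear_bracket | exact: twist_even_bracket].
- by split; [exact: linear_map_comp | exact: even_map_comp].
- by move=> a b x y hx hy; rewrite (br_skew a b) // linear_mapN // linear_mapZ.
move=> a b c x y z hx hy hz /=.
rewrite -!beta_mul -!(linear_mapZ beta_linear) -!(linear_mapD beta_linear).
by rewrite jacobi // !linear_map0.
Qed.

Lemma twist_bilinear_form : is_bilinear_form B -> is_bilinear_form B_beta.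
Proof. by case=> BDl BDr; split=> k x y z; rewrite ?beta_linear ?BDl ?BDr. Qed.

Lemma twist_nondegenerate : injective beta ->
  (forall x, (forall y, B x y = 0) -> x = 0) ->
  forall x, (forall y, B_beta x y = 0) -> x = 0.
Proof.
move=> beta_inj B_nondeg x /B_nondeg beta_x0.
by apply: beta_inj; rewrite beta_x0 linear_map0.
Qed.

Hypothesis beta_selfadjoint : forall x y, B (beta x) y = B x (beta y).

Lemma twist_eps_symmetric :
  (forall a b x y, homog a x -> homog b y -> B x y = eps a b * B y x) ->
  forall a b x y, homog a x -> homog b y -> B_beta x y = eps a b * B_beta y x.
Proof.
move=> B_sym a b x y hx hy /=.
by rewrite beta_selfadjoint (B_sym a b) //; apply: beta_even.
Qed.

Lemma twist_invariant :
  (forall x y, beta (br x y) = br (beta x) (beta y)) ->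
  (forall x y z, B (br x y) z = B x (br y z)) ->
  forall x y z, B_beta (br_beta x y) z = B_beta x (br_beta y z).
Proof.
by move=> beta_mul B_inv x y z /=; rewrite beta_selfadjoint beta_mul B_inv -beta_mul.
Qed.

Lemma twist_selfadjoint_alpha :
  (forall x, beta (alpha x) = alpha (beta x)) ->
  (forall x y, B (alpha x) y = B x (alpha y)) ->
  forall x y, B_beta ((beta \o alpha) x) y = B_beta x ((beta \o alpha) y).
Proof.
move=> beta_alpha alpha_sa x y /=.
by rewrite beta_selfadjoint beta_alpha alpha_sa beta_alpha.
Qed.

End Twist.

Theorem mainTheorem2 (K : fieldType) (Gamma : zmodType) (V : lmodType K)
    (homog : Gamma -> V -> Prop) (br : V -> V -> V) (alpha : V -> V)
    (eps : Gamma -> Gamma -> K) (B : V -> V -> K) (beta : V -> V) :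
  [pchar K] =i pred0 ->
  quadratic_color_HomLie homog br alpha eps B ->
  symmetric_automorphism homog br alpha B beta ->
  quadratic_color_HomLie homog (fun x y => beta (br x y)) (beta \o alpha) eps
    (fun x y => B (beta x) y).
Proof.
move=> _ [[colorHL B_bilin] B_nondeg B_sym B_inv alpha_sa].
move=> [[beta_linear beta_even] beta_bij beta_mul beta_alpha beta_sa].
split.
- split; first exact: twist_color_HomLie.
  exact: twist_bilinear_form.
- exact: twist_nondegenerate (bij_inj beta_bij) B_nondeg.
- exact: twist_eps_symmetric.
- exact: twist_invariant.
- exact: twist_selfadjoint_alpha.
Qed.
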